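(* Consider the set of all bubbles, with output and input colours as defined in the context. Equip it with the partial composition $\mathfrak B_1\circ_i\mathfrak B_2$ given by the composition of the operad $\mathrm{CNCB}$ and defined exactly when $\mathrm{Out}(\mathfrak B_2)=\mathrm{In}_i(\mathfrak B_1)$, and add two units $\mathbf 1_1,\mathbf 1_2$ (where $\mathbf 1_c$ has arity $1$ and output and input colour $c$). This forms a $2$-coloured operad $\mathrm{Bulle}$. In particular, whenever $\mathrm{Out}(\mathfrak B_2)=\mathrm{In}_i(\mathfrak B_1)$, the $\mathrm{CNCB}$-composite $\mathfrak B_1\circ_i\mathfrak B_2$ is again a bubble.
   Context: For $n\ge2$, a bicoloured noncrossing configuration (BNC) of size $n$ is a regular polygon with $n+1$ vertices numbered $1,\dots,n+1$ clockwise, together with two disjoint sets of arcs, blue arcs and red arcs. An arc is a pair $(i,j)$ with $1\le i<j\le n+1$. The arcs $(i,i+1)$, $1\le i\le n$, are the edges ($(i,i+1)$ is the $i$th edge), $(1,n+1)$ is the base, and all other arcs are diagonals. Coloured (blue or red) arcs must be pairwise noncrossing, where $(i,j)$ and $(k,l)$ cross iff $i<k<j<l$ or $k<i<l<j$, and red arcs must be diagonals. Other arcs are uncoloured. There is one BNC of size $1$, a single blue arc. The operad $\mathrm{CNCB}$ has the BNCs as elements (arity = size). Its composition $\mathfrak C\circ_i\mathfrak D$ ($\mathfrak C$ of size $n$, $\mathfrak D$ of size $m$) glues the base of $\mathfrak D$ onto the $i$th edge of $\mathfrak C$. Arcs $(a,b)$ of $\mathfrak C$ become $(\sigma(a),\sigma(b))$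 with $\sigma(v)=v$ for $v\le i$ and $\sigma(v)=v+m-1$ for $v>i$, and arcs $(a,b)$ of $\mathfrak D$ become $(a+i-1,b+i-1)$; all keep their colours. The exception is the glued arc $(i,i+m)$, which is red if the $i$th edge of $\mathfrak C$ and the base of $\mathfrak D$ are both uncoloured, blue if both are blue, and uncoloured otherwise. A bubble is a BNC of size at least $2$ with no coloured diagonal. A BNC is based if its base is blue. For a bubble $\mathfrak B$ of size $n$, its output colour is $\mathrm{Out}(\mathfrak B)=1$ if $\mathfrak B$ is based and $2$ otherwise. Its $i$th input colour $\mathrm{In}_i(\mathfrak B)$, for $i\in[n]$, is $1$ if the $i$th edge of $\mathfrak B$ is uncoloured and $2$ if it is blue. *)

From mathcomp Require Import all_boot.
Set Implicit Arguments. Unset Strict Implicit. Unset Printing Implicit Defensive.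

(** A configuration of size n has vertices 1..n+1.  We represent it by its size
   and a colouring function on pairs of vertices; only pairs (i,j) with
   1 <= i < j <= n+1 (the arcs) may be coloured. *)

Inductive colour := Unc | Blue | Red.

Record bnc := mkBNC { bsz : nat; bcol : nat -> nat -> colour }.

Definition is_arc (n x y : nat) : bool := (1 <= x) && (x < y) && (y <= n.+1).
Definition is_edge (x y : nat) : bool := y == x.+1.
Definition is_base (n x y : nat) : bool := (x == 1) && (y == n.+1).
Definition is_diag (n x y : nat) : bool :=
  is_arc n x y && ~~ is_edge x y && ~~ is_base n x y.

Definition crossing (i j k l : nat) : bool :=
  ((i < k) && (k < j) && (j < l)) || ((k < i) && (i < l) && (l < j)).

Definition is_bnc (b : bnc) : Prop :=
  1 <= bsz b /\
  (forall x y, ~~ is_arc (bsz b) x y -> bcol b x y = Unc) /\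
  (forall x y, bcol b x y = Red -> is_diag (bsz b) x y) /\
  (forall x y x' y', bcol b x y <> Unc -> bcol b x' y' <> Unc ->
      ~~ crossing x y x' y') /\
  (bsz b = 1 -> bcol b 1 2 = Blue).

(* colour of the glued arc from (ith edge of C, base of D) *)
Definition glue (c1 c2 : colour) : colour :=
  match c1, c2 with
  | Unc, Unc => Red
  | Blue, Blue => Blue
  | _, _ => Unc
  end.

(* C o_i D : vertices v of C go to sigma v (v if v <= i, v + m - 1 otherwise),
   vertices a of D go to a + i - 1; arc (i, i+m) is the glued arc. *)
Definition cncb_comp (C : bnc) (i : nat) (D : bnc) : bnc :=
  let n := bsz C in let m := bsz D in
  let in_sig v := (v <= i) || (i + m <= v) in
  let siginv v := if v <= i then v else v - (m - 1) in
  mkBNC (n + m - 1) (fun x y =>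
    if (x == i) && (y == i + m) then glue (bcol C i i.+1) (bcol D 1 m.+1)
    else if in_sig x && in_sig y then bcol C (siginv x) (siginv y)
    else if (i <= x) && (y <= i + m) then bcol D (x - i + 1) (y - i + 1)
    else Unc).

Definition is_bubble (b : bnc) : Prop :=
  is_bnc b /\ 2 <= bsz b /\
  (forall x y, is_diag (bsz b) x y -> bcol b x y = Unc).

Definition is_based (b : bnc) : Prop := bcol b 1 (bsz b).+1 = Blue.

Definition bout (b : bnc) : nat :=
  match bcol b 1 (bsz b).+1 with Blue => 1 | _ => 2 end.
Definition bin (b : bnc) (j : nat) : nat :=
  match bcol b j j.+1 with Blue => 2 | _ => 1 end.

(** * Non-symmetric coloured operads, presented by partial compositions.
   Elements live in a carrier X restricted by a predicate P; colours in C
   restricted by Col; inputs are indexed 1..ar x. *)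

Definition coloured_operad {X C : Type} (Col : C -> Prop) (P : X -> Prop)
  (ar : X -> nat) (out : X -> C) (inp : X -> nat -> C)
  (comp : X -> nat -> X -> X) (unit : C -> X) : Prop :=
  (forall x, P x -> Col (out x) /\ forall j, 1 <= j <= ar x -> Col (inp x j)) /\
  (forall c, Col c -> P (unit c) /\ ar (unit c) = 1 /\ out (unit c) = c /\
                      inp (unit c) 1 = c) /\
  (forall x y i, P x -> P y -> 1 <= i <= ar x -> out y = inp x i ->
     P (comp x i y) /\ ar (comp x i y) = ar x + ar y - 1 /\
     out (comp x i y) = out x /\
     forall j, 1 <= j <= ar x + ar y - 1 ->
       inp (comp x i y) j =
         (if j < i then inp x j
          else if j < i + ar y then inp y (j - i + 1)
          else inp x (j - ar y + 1))) /\
  (forall x, P x -> comp (unit (out x)) 1 x = x) /\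
  (forall x i, P x -> 1 <= i <= ar x -> comp x i (unit (inp x i)) = x) /\
  (forall x y z i j, P x -> P y -> P z -> 1 <= i <= ar x -> 1 <= j <= ar y ->
     out y = inp x i -> out z = inp y j ->
     comp (comp x i y) (i + j - 1) z = comp x i (comp y j z)) /\
  (forall x y z i j, P x -> P y -> P z -> 1 <= i -> i < j -> j <= ar x ->
     out y = inp x i -> out z = inp x j ->
     comp (comp x i y) (j + ar y - 1) z = comp (comp x j z) i y).

Inductive belt := BUnit of nat | BBub of bnc.

Definition bulle_colour (c : nat) : Prop := c = 1 \/ c = 2.

Definition bulle_valid (x : belt) : Prop :=
  match x with BUnit c => bulle_colour c | BBub b => is_bubble b end.

Definition bulle_ar (x : belt) : nat :=
  match x with BUnit _ => 1 | BBub b => bsz b end.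

Definition bulle_out (x : belt) : nat :=
  match x with BUnit c => c | BBub b => bout b end.

Definition bulle_in (x : belt) (j : nat) : nat :=
  match x with BUnit c => c | BBub b => bin b j end.

Definition bulle_comp (x : belt) (i : nat) (y : belt) : belt :=
  match x, y with
  | BUnit _, _ => y
  | _, BUnit _ => x
  | BBub b1, BBub b2 => BBub (cncb_comp b1 i b2)
  end.

Definition bulle_unit (c : nat) : belt := BUnit c.

(* A bubble is exactly a configuration of size at least 2 whose coloured arcs
   are blue edges or the blue base.  A CNCB composite only relocates the arcs
   of its two factors, except for the glued arc: it is red when the glued edge
   and base are both uncoloured, blue when both are blue, and uncoloured
   otherwise.  For a bubble edge and a bubble base the last case is exactly
   Out = In_i, so matching composites of bubbles are again bubbles, with input
   and output colours read off the factors.  The operad axioms are then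
   inherited from the two associativity laws of CNCB, checked arc by arc. *)

From mathcomp Require Import all_boot zify.
From Stdlib Require Import FunctionalExtensionality.

Ltac first_test c := lazymatch c with
  | ?c1 && _ => first_test c1 | ?c1 || _ => first_test c1 | ~~ ?c1 => first_test c1
  | _ => c end.

(* Case split on every innermost conditional, discarding the branches that
   are arithmetically impossible. *)
Ltac case_ifs := repeat match goal with |- context [if ?c then _ else _] =>
  lazymatch c with context [if _ then _ else _] => fail | _ =>
    let t := first_test c in let E := fresh "E" in
    case E: t; rewrite /=; try (exfalso; lia) end end.

Definition uncoloured_off_arcs (n : nat) (f : nat -> nat -> colour) : Prop :=
  forall u v, ~~ is_arc n u v -> f u v = Unc.

(* Closes an equation between colours of arcs: arcs outside a polygon are
   uncoloured, and the remaining arguments agree by arithmetic. *)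
Ltac colours_congr := repeat match goal with
  | H : uncoloured_off_arcs _ ?f |- context [?f ?p ?q] =>
      rewrite (H p q); [| rewrite /is_arc; lia] end;
  try reflexivity; repeat match goal with
  | |- glue _ _ = glue _ _ => congr glue
  | |- ?f _ _ = ?f _ _ => congr (f _ _); lia end.

Lemma bnc_ext (X Y : bnc) :
  bsz X = bsz Y -> (forall u v, bcol X u v = bcol Y u v) -> X = Y.
Proof.
case: X Y => n f [m g] /= -> eqfg; congr mkBNC.
by apply: functional_extensionality => u; apply: functional_extensionality.
Qed.

Lemma glueA_blue (c d : colour) : c <> Red -> d <> Red ->
  glue (glue c Blue) d = glue c (glue Blue d).
Proof. by case: c; case: d. Qed.

Lemma bnc_edge_not_red (X : bnc) (u : nat) : is_bnc X -> bcol X u u.+1 <> Red.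
Proof.
by case=> _ [_ [rX _]] /rX; rewrite /is_diag /is_edge eqxx andbF.
Qed.

Lemma bnc_base_not_red (X : bnc) : is_bnc X -> bcol X 1 (bsz X).+1 <> Red.
Proof.
by case=> _ [_ [rX _]] /rX; rewrite /is_diag /is_base !eqxx andbF.
Qed.

Lemma bnc_uncoloured_off_arcs (X : bnc) :
  is_bnc X -> uncoloured_off_arcs (bsz X) (bcol X).
Proof. by case=> _ []. Qed.

Lemma cncb_compA (X Y Z : bnc) (i j : nat) :
  is_bnc X -> is_bnc Y -> is_bnc Z -> 1 <= i <= bsz X -> 1 <= j <= bsz Y ->
  cncb_comp (cncb_comp X i Y) (i + j - 1) Z = cncb_comp X i (cncb_comp Y j Z).
Proof.
move=> bX bY bZ hi hj.
have uX := bnc_uncoloured_off_arcs X bX; have uY := bnc_uncoloured_off_arcs Y bY.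
have uZ := bnc_uncoloured_off_arcs Z bZ.
have X1 : 0 < bsz X by case: bX. have Y1 : 0 < bsz Y by case: bY.
have Z1 : 0 < bsz Z by case: bZ.
apply: bnc_ext => [/=|a b]; first lia.
rewrite /cncb_comp /=; case_ifs; try solve [colours_congr].
(* Left over: Y is the one-arc configuration, so both sides glue three arcs. *)
have Yn : bsz Y = 1 by lia.
have -> : j = 1 by lia.
case: bY => _ [_ [_ [_ Y_unit]]].
rewrite Yn Y_unit // glueA_blue //.
  exact: bnc_edge_not_red _ _ bX.
exact: bnc_base_not_red _ bZ.
Qed.

Lemma cncb_compAC (X Y Z : bnc) (i j : nat) :
  is_bnc X -> is_bnc Y -> is_bnc Z -> 1 <= i -> i < j -> j <= bsz X ->
  cncb_comp (cncb_comp X i Y) (j + bsz Y - 1) Z =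
  cncb_comp (cncb_comp X j Z) i Y.
Proof.
move=> bX bY bZ *.
have uX := bnc_uncoloured_off_arcs X bX; have uY := bnc_uncoloured_off_arcs Y bY.
have uZ := bnc_uncoloured_off_arcs Z bZ.
have X1 : 0 < bsz X by case: bX. have Y1 : 0 < bsz Y by case: bY.
have Z1 : 0 < bsz Z by case: bZ.
apply: bnc_ext => [/=|a b]; first lia.
by rewrite /cncb_comp /=; case_ifs; colours_congr.
Qed.

Definition edge_or_base (n u v : nat) : bool :=
  is_arc n u v && (is_edge u v || is_base n u v).

Definition blue_boundary (B : bnc) : Prop :=
  forall u v, bcol B u v <> Unc -> bcol B u v = Blue /\ edge_or_base (bsz B) u v.

Lemma blue_boundary_off (B : bnc) (u v : nat) :
  blue_boundary B -> ~~ edge_or_base (bsz B) u v -> bcol B u v = Unc.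
Proof.
move=> bB nuv; case E: (bcol B u v) => //.
all: have [|_ e] := bB u v; first by rewrite E.
all: by rewrite e in nuv.
Qed.

Lemma bubbleP (B : bnc) : is_bubble B <-> 2 <= bsz B /\ blue_boundary B.
Proof.
rewrite /is_bubble /is_bnc.
split=> [[[_ [uB [rB _]]] [B2 dB]] | [B2 bB]].
  split=> // u v cuv; have aB : is_arc (bsz B) u v.
    by apply/negPn/negP => /uB.
  have ndB : ~~ is_diag (bsz B) u v by apply/negP => /dB.
  split; last by move: ndB; rewrite /edge_or_base /is_diag aB /= negb_and !negbK.
  case E: (bcol B u v) cuv => // _; have := dB _ _ (rB _ _ E); by rewrite E.
split; [split; first lia | split=> // u v dB]; last first.
  apply: (blue_boundary_off _ _ _ bB).
  by move: dB; rewrite /edge_or_base /is_diag; lia.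
split=> [u v nA|].
  by apply: (blue_boundary_off _ _ _ bB); move: nA; rewrite /edge_or_base; lia.
split=> [u v rB|]; first by have [] := bB u v; rewrite rB.
split=> [u v u' v' /bB [_ e] /bB [_ e']|]; last lia.
by move: e e'; rewrite /edge_or_base /is_arc /is_edge /is_base /crossing; lia.
Qed.

Lemma glue_matching (B1 B2 : bnc) (i : nat) :
  bout B2 = bin B1 i -> glue (bcol B1 i i.+1) (bcol B2 1 (bsz B2).+1) = Unc.
Proof. by rewrite /bout /bin; case: (bcol B1 i i.+1); case: (bcol B2 1 _). Qed.

Lemma cncb_comp_blue_boundary (X Y : bnc) (i : nat) :
  blue_boundary X -> blue_boundary Y -> 1 <= i <= bsz X -> 1 <= bsz Y ->
  glue (bcol X i i.+1) (bcol Y 1 (bsz Y).+1) = Unc ->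
  blue_boundary (cncb_comp X i Y).
Proof.
move=> bX bY hi hY hg a b; rewrite /cncb_comp /= hg; case_ifs => //.
all: (case/bX || case/bY) => -> e; split=> //.
all: by move: e; rewrite /edge_or_base /is_arc /is_edge /is_base; lia.
Qed.

Lemma cncb_comp_bubble (B1 B2 : bnc) (i : nat) :
  is_bubble B1 -> is_bubble B2 -> 1 <= i <= bsz B1 -> bout B2 = bin B1 i ->
  is_bubble (cncb_comp B1 i B2).
Proof.
move=> /bubbleP [B1_2 bB1] /bubbleP [B2_2 bB2] hi /glue_matching hg.
apply/bubbleP; split; first by rewrite /=; lia.
by apply: cncb_comp_blue_boundary => //; lia.
Qed.

Lemma bout_cncb_comp (X Y : bnc) (i : nat) :
  2 <= bsz X -> 1 <= bsz Y -> 1 <= i <= bsz X ->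
  bout (cncb_comp X i Y) = bout X.
Proof.
move=> *; rewrite /bout (_ : bcol (cncb_comp X i Y) _ _ = bcol X 1 (bsz X).+1) //.
by rewrite /cncb_comp /=; case_ifs; congr (bcol X _ _); lia.
Qed.

Lemma cncb_comp_edge (X Y : bnc) (i j : nat) :
  2 <= bsz Y -> 1 <= i <= bsz X -> 1 <= j <= bsz X + bsz Y - 1 ->
  bcol (cncb_comp X i Y) j j.+1 =
  if j < i then bcol X j j.+1
  else if j < i + bsz Y then bcol Y (j - i + 1) (j - i + 1).+1
  else bcol X (j - bsz Y + 1) (j - bsz Y + 1).+1.
Proof.
move=> *; rewrite /cncb_comp /=; case_ifs.
all: by first [congr (bcol X _ _) | congr (bcol Y _ _)]; lia.
Qed.

Lemma bin_cncb_comp (X Y : bnc) (i j : nat) :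
  2 <= bsz Y -> 1 <= i <= bsz X -> 1 <= j <= bsz X + bsz Y - 1 ->
  bin (cncb_comp X i Y) j =
  if j < i then bin X j else if j < i + bsz Y then bin Y (j - i + 1)
  else bin X (j - bsz Y + 1).
Proof.
by move=> *; rewrite /bin cncb_comp_edge //; case: (j < i); case: (j < i + bsz Y).
Qed.

Lemma bulle_colours (x : belt) : bulle_valid x ->
  bulle_colour (bulle_out x) /\
  forall j, 1 <= j <= bulle_ar x -> bulle_colour (bulle_in x j).
Proof.
rewrite /bulle_colour; case: x => [c|B] //= _; split=> [|j _].
  by rewrite /bout; case: (bcol B 1 _); auto.
by rewrite /bin; case: (bcol B j _); auto.
Qed.

Lemma bulle_comp_typed (x y : belt) (i : nat) :
  bulle_valid x -> bulle_valid y -> 1 <= i <= bulle_ar x ->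
  bulle_out y = bulle_in x i ->
  bulle_valid (bulle_comp x i y) /\
  bulle_ar (bulle_comp x i y) = bulle_ar x + bulle_ar y - 1 /\
  bulle_out (bulle_comp x i y) = bulle_out x /\
  forall j, 1 <= j <= bulle_ar x + bulle_ar y - 1 ->
    bulle_in (bulle_comp x i y) j =
      (if j < i then bulle_in x j
       else if j < i + bulle_ar y then bulle_in y (j - i + 1)
       else bulle_in x (j - bulle_ar y + 1)).
Proof.
case: x => [c|X]; case: y => [d|Y] /= vx vy hi hxy.
- by do 3 split=> //; move=> j _; rewrite hxy; repeat case: ifP.
- have -> : i = 1 by lia.
  split=> //; split; first lia; split=> // j hj.
  by rewrite ifF ?ifT; [congr bin | ..]; lia.
- split=> //; split; first lia; split=> // j hj.
  case: ifP => // ji; case: ifP => ij; last by congr bin; lia.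
  by rewrite hxy (_ : j = i) //; lia.
have [X2 _] := proj1 (bubbleP X) vx; have [Y2 _] := proj1 (bubbleP Y) vy.
split; first exact: cncb_comp_bubble.
split=> //; split; first by apply: bout_cncb_comp => //; lia.
by move=> j hj; apply: bin_cncb_comp.
Qed.

Lemma bubble_is_bnc (B : bnc) : is_bubble B -> is_bnc B.
Proof. by case. Qed.

Lemma bulle_compA (x y z : belt) (i j : nat) :
  bulle_valid x -> bulle_valid y -> bulle_valid z ->
  1 <= i <= bulle_ar x -> 1 <= j <= bulle_ar y ->
  bulle_comp (bulle_comp x i y) (i + j - 1) z = bulle_comp x i (bulle_comp y j z).
Proof.
case: x => [c|X]; case: y => [d|Y]; case: z => [e|Z] //= vX vY vZ hi hj.
all: try by congr (BBub (cncb_comp _ _ _)); lia.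
by congr BBub; apply: cncb_compA => //; apply: bubble_is_bnc.
Qed.

Lemma bulle_compAC (x y z : belt) (i j : nat) :
  bulle_valid x -> bulle_valid y -> bulle_valid z ->
  1 <= i -> i < j -> j <= bulle_ar x ->
  bulle_comp (bulle_comp x i y) (j + bulle_ar y - 1) z =
  bulle_comp (bulle_comp x j z) i y.
Proof.
case: x => [c|X]; case: y => [d|Y]; case: z => [e|Z] //= vX vY vZ hi hij hj.
all: try by [lia | congr (BBub (cncb_comp _ _ _)); lia].
by congr BBub; apply: cncb_compAC => //; apply: bubble_is_bnc.
Qed.

Theorem proposition2p2 :
  coloured_operad bulle_colour bulle_valid bulle_ar bulle_out bulle_in
    bulle_comp bulle_unit /\
  (forall (B1 B2 : bnc) (i : nat), is_bubble B1 -> is_bubble B2 ->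
     1 <= i <= bsz B1 -> bout B2 = bin B1 i ->
     is_bubble (cncb_comp B1 i B2)).
Proof.
split; last exact: cncb_comp_bubble.
split; first exact: bulle_colours.
split; first by move=> c vc; do !split.
split; first exact: bulle_comp_typed.
split; first by [].
split; first by move=> [c|B].
split=> [x y z i j vx vy vz hi hj _ _ | x y z i j vx vy vz hi hij hj _ _].
  exact: bulle_compA.
exact: bulle_compAC.
Qed.
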